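(* Fix $R>0$. For $\theta_0\in[0,2\pi)$, $\varphi_0\in[0,2\pi)$ and $\tau\geq 0$ define $$\mathbf r_0(\theta_0,\varphi_0)=(-R\cos\theta_0\cos\varphi_0,\;R\cos\theta_0\sin\varphi_0,\;R\sin\theta_0),\qquad \mathbf p_0(\theta_0,\varphi_0)=(\sin\theta_0\cos\varphi_0,\;-\sin\theta_0\sin\varphi_0,\;\cos\theta_0),$$ and the ray map $F(\theta_0,\varphi_0,\tau)=\mathbf r_0(\theta_0,\varphi_0)+\tau\,\mathbf p_0(\theta_0,\varphi_0)\in\mathbb R^3$. Then the caustic of this family of rays, i.e. the set $$\{F(\theta_0,\varphi_0,\tau)\;:\;\det DF(\theta_0,\varphi_0,\tau)=0\}$$ (where $DF$ is the Jacobian matrix of $(x,y,z)=F$ with respect to $(\theta_0,\varphi_0,\tau)$), is the union of (a) the sphere $\{\mathbf x\in\mathbb R^3:|\mathbf x|=R\}$ (the surface of the ball, envelope of the diffracted rays) and (b) the two semiaxes $\mathcal A_+=\{(0,0,z):z\geq R\}$ and $\mathcal A_-=\{(0,0,z):z\leq -R\}$ (the axial caustic).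
   Context: Physical setting: a spherical obstacle (ball of radius $R$ centred at the origin of Cartesian coordinates $(x,y,z)$) is illuminated by a beam of rays parallel to the $z$-axis coming from $z=-\infty$; rays grazing the sphere travel along meridians and leave it tangentially. The point $\mathbf r_0$ is the point on the sphere where the ray leaves the surface ($\theta_0$ is the angle measured along the meridian from the point of incidence, $\varphi_0$ the azimuthal angle), $\mathbf p_0$ is the unit tangent vector there, and $\tau\ge 0$ is the arclength parameter along the emerging straight ray. The extended symmetry axis of the ball is the $z$-axis, $\mathcal A_-$ is its part on the illuminated side and $\mathcal A_+$ its part in the shadow. *)

From Stdlib Require Import Reals.
From Coquelicot Require Import Coquelicot.
Open Scope R_scope.

Definition pt3 := (R * R * R)%type.
Definition px (p : pt3) : R := fst (fst p).
Definition py (p : pt3) : R := snd (fst p).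
Definition pz (p : pt3) : R := snd p.

Definition r0 (Rr th ph : R) : pt3 :=
  (- Rr * cos th * cos ph, Rr * cos th * sin ph, Rr * sin th).
Definition p0 (th ph : R) : pt3 :=
  (sin th * cos ph, - sin th * sin ph, cos th).

Definition rayF (Rr th ph tau : R) : pt3 :=
  (px (r0 Rr th ph) + tau * px (p0 th ph),
   py (r0 Rr th ph) + tau * py (p0 th ph),
   pz (r0 Rr th ph) + tau * pz (p0 th ph)).

Definition det3 (a11 a12 a13 a21 a22 a23 a31 a32 a33 : R) : R :=
  a11 * (a22 * a33 - a23 * a32)
  - a12 * (a21 * a33 - a23 * a31)
  + a13 * (a21 * a32 - a22 * a31).

Definition jacF (Rr th ph tau : R) : R :=
  let c (k : pt3 -> R) (i : nat) : R :=
    match i with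
    | 0%nat => Derive (fun t => k (rayF Rr t ph tau)) th
    | 1%nat => Derive (fun t => k (rayF Rr th t tau)) ph
    | _ => Derive (fun t => k (rayF Rr th ph t)) tau
    end in
  det3 (c px 0%nat) (c px 1%nat) (c px 2%nat)
       (c py 0%nat) (c py 1%nat) (c py 2%nat)
       (c pz 0%nat) (c pz 1%nat) (c pz 2%nat).

Definition caustic (Rr : R) (p : pt3) : Prop :=
  exists th ph tau,
    0 <= th < 2 * PI /\ 0 <= ph < 2 * PI /\ 0 <= tau /\
    jacF Rr th ph tau = 0 /\ rayF Rr th ph tau = p.

Definition on_sphere (Rr : R) (p : pt3) : Prop :=
  sqrt (px p ^ 2 + py p ^ 2 + pz p ^ 2) = Rr.
Definition axis_plus (Rr : R) (p : pt3) : Prop :=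
  px p = 0 /\ py p = 0 /\ Rr <= pz p.
Definition axis_minus (Rr : R) (p : pt3) : Prop :=
  px p = 0 /\ py p = 0 /\ pz p <= - Rr.

(** The ray map is [F = r0 + tau p0] with [p0] the unit tangent along the
    meridian, and a direct computation gives
    [det DF = - tau (tau sin th - R cos th)].  The Jacobian thus vanishes
    either at the exit point ([tau = 0]), whose image sweeps the sphere, or
    where [tau sin th = R cos th]: there the ray meets the axis, at height
    [z] with [z sin th = R], hence [|z| >= R].  Conversely every point of the
    sphere and of the two semiaxes is reached this way, the angles being
    recovered from polar coordinates. *)
From Stdlib Require Import Reals Lra.
From Coquelicot Require Import Coquelicot.
Open Scope R_scope.

Lemma jacF_eq (Rr th ph tau : R) :
  jacF Rr th ph tau = - tau * (tau * sin th - Rr * cos th).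
Proof.
unfold jacF, rayF, r0, p0, px, py, pz; cbn -[Derive].
repeat match goal with |- context [Derive ?f ?x] =>
  erewrite (is_derive_unique f x _ ltac:(auto_derive; auto)) end.
unfold det3.
assert (Eth : cos th ^ 2 = 1 - sin th ^ 2) by (rewrite <- (sin2_cos2 th); unfold Rsqr; ring).
assert (Eph : cos ph ^ 2 = 1 - sin ph ^ 2) by (rewrite <- (sin2_cos2 ph); unfold Rsqr; ring).
ring_simplify; rewrite ?Eph; ring_simplify.
replace (cos th ^ 3) with (cos th * cos th ^ 2) by ring.
rewrite ?Eth; ring.
Qed.

Lemma unit_angle (a b : R) : a ^ 2 + b ^ 2 = 1 ->
  exists t, 0 <= t < 2 * PI /\ cos t = a /\ sin t = b.
Proof.
intros Hab.
assert (Ha : -1 <= a <= 1) by nra.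
pose proof PI_RGT_0.
destruct (Rle_or_lt 0 b) as [Hb | Hb].
- exists (acos a); pose proof (acos_bound a).
  split; [lra |]; split; [apply cos_acos; lra |].
  rewrite sin_acos by lra.
  replace (1 - a²) with (b²) by (unfold Rsqr; lra).
  apply sqrt_Rsqr; lra.
- assert (Ha' : -1 < a < 1) by nra.
  pose proof (acos_bound_lt a Ha').
  exists (2 * PI - acos a); split; [lra |].
  rewrite cos_minus, sin_minus, cos_2PI, sin_2PI, cos_acos, sin_acos by lra.
  split; [ring |].
  replace (1 - a²) with ((- b)²) by (unfold Rsqr; lra).
  rewrite sqrt_Rsqr by lra; ring.
Qed.

Lemma polar_angle (x y : R) : exists t, 0 <= t < 2 * PI /\
  x = sqrt (x ^ 2 + y ^ 2) * cos t /\ y = sqrt (x ^ 2 + y ^ 2) * sin t.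
Proof.
set (r := sqrt (x ^ 2 + y ^ 2)).
assert (Hr2 : r ^ 2 = x ^ 2 + y ^ 2) by (apply pow2_sqrt; nra).
destruct (Req_dec r 0) as [Hr0 | Hr0].
- exists 0; pose proof PI_RGT_0.
  rewrite Hr0 in Hr2 |- *; split; [lra |]; split; nra.
- destruct (unit_angle (x / r) (y / r)) as [t [Ht [Hc Hs]]].
  { field_simplify; [rewrite <- Hr2; field |]; exact Hr0. }
  exists t; split; [exact Ht |]; rewrite Hc, Hs; split; field; exact Hr0.
Qed.

Lemma on_sphere_iff (Rr : R) (p : pt3) : 0 <= Rr ->
  on_sphere Rr p <-> px p ^ 2 + py p ^ 2 + pz p ^ 2 = Rr ^ 2.
Proof.
intros HR; unfold on_sphere; split.
- intros <-; symmetry; apply pow2_sqrt; nra.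
- intros E; rewrite E; apply sqrt_pow2, HR.
Qed.

Lemma rayF_exit_on_sphere (Rr th ph : R) : 0 <= Rr ->
  on_sphere Rr (rayF Rr th ph 0).
Proof.
intros HR; apply on_sphere_iff; [exact HR |].
unfold rayF, r0, p0, px, py, pz; cbn.
pose proof (sin2_cos2 th) as Eth; pose proof (sin2_cos2 ph) as Eph.
unfold Rsqr in *.
transitivity (Rr ^ 2 * (cos th * cos th * (sin ph * sin ph + cos ph * cos ph)
  + sin th * sin th)); [ring |].
rewrite Eph, Rmult_1_r, Rplus_comm, Eth; ring.
Qed.

Lemma rayF_focal (Rr th ph tau : R) : tau * sin th = Rr * cos th ->
  px (rayF Rr th ph tau) = 0 /\ py (rayF Rr th ph tau) = 0 /\
  pz (rayF Rr th ph tau) * sin th = Rr.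
Proof.
intros Htau; unfold rayF, r0, p0, px, py, pz; cbn.
split; [| split].
- transitivity ((tau * sin th - Rr * cos th) * cos ph); [ring | rewrite Htau; ring].
- transitivity (- (tau * sin th - Rr * cos th) * sin ph); [ring | rewrite Htau; ring].
- transitivity (Rr * (sin th)² + cos th * (tau * sin th)); [unfold Rsqr; ring |].
  rewrite Htau; transitivity (Rr * ((sin th)² + (cos th)²)); [unfold Rsqr; ring |].
rewrite sin2_cos2; ring.
Qed.

Lemma abs_ge_of_mul_sin (Rr z s : R) : 0 < Rr -> -1 <= s <= 1 -> z * s = Rr ->
  Rr <= z \/ z <= - Rr.
Proof.
intros HR Hs Hz.
destruct (Rle_or_lt 0 z); [left | right]; nra.
Qed.

Lemma caustic_sub_sphere_or_axes (Rr : R) (p : pt3) : 0 < Rr -> caustic Rr p ->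
  on_sphere Rr p \/ axis_plus Rr p \/ axis_minus Rr p.
Proof.
intros HR [th [ph [tau [_ [_ [_ [J <-]]]]]]].
rewrite jacF_eq in J.
destruct (Rmult_integral _ _ J) as [Htau | Hfocal].
- left; replace tau with 0 by lra; apply rayF_exit_on_sphere; lra.
- right; destruct (rayF_focal Rr th ph tau ltac:(lra)) as [Hx [Hy Hz]].
  destruct (abs_ge_of_mul_sin Rr _ _ HR (SIN_bound th) Hz); [left | right];
    repeat split; assumption.
Qed.

Lemma sphere_sub_caustic (Rr x y z : R) : 0 < Rr ->
  x ^ 2 + y ^ 2 + z ^ 2 = Rr ^ 2 -> caustic Rr (x, y, z).
Proof.
intros HR Hxyz.
set (r := sqrt (x ^ 2 + y ^ 2)).
assert (Hr2 : r ^ 2 = x ^ 2 + y ^ 2) by (apply pow2_sqrt; nra).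
destruct (polar_angle (- r) z) as [th [Hth [Hc Hs]]].
destruct (polar_angle x (- y)) as [ph [Hph [Hcp Hsp]]].
replace (sqrt ((- r) ^ 2 + z ^ 2)) with Rr in Hc, Hs
  by (rewrite <- (sqrt_pow2 Rr) by lra; f_equal; rewrite <- Hxyz, <- Hr2; ring).
replace (sqrt (x ^ 2 + (- y) ^ 2)) with r in Hcp, Hsp by (unfold r; f_equal; ring).
exists th, ph, 0; split; [exact Hth |]; split; [exact Hph |].
split; [lra |]; split; [rewrite jacF_eq; ring |].
unfold rayF, r0, p0, px, py, pz; cbn.
f_equal; [f_equal |]; nra.
Qed.

(** The ray leaving the sphere at [th] with [z sin th = R] reaches [(0, 0, z)]
    after the length [tau = z cos th], which must be nonnegative. *)
Lemma axis_sub_caustic (Rr z : R) : 0 < Rr -> Rr <= Rabs z -> caustic Rr (0, 0, z).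
Proof.
intros HR Hz.
assert (Hz0 : z <> 0) by (intros ->; rewrite Rabs_R0 in Hz; lra).
assert (Hz2 : Rr ^ 2 <= z ^ 2) by (rewrite <- (pow2_abs z); nra).
destruct (unit_angle (sqrt (z ^ 2 - Rr ^ 2) / z) (Rr / z)) as [th [Hth [Hc Hs]]].
{ field_simplify; [rewrite pow2_sqrt by lra; field |]; exact Hz0. }
assert (Hzc : z * cos th = sqrt (z ^ 2 - Rr ^ 2)) by (rewrite Hc; field; exact Hz0).
assert (Hzs : z * sin th = Rr) by (rewrite Hs; field; exact Hz0).
pose proof PI_RGT_0.
exists th, 0, (z * cos th); split; [exact Hth |]; split; [lra |].
split; [rewrite Hzc; apply sqrt_pos |].
split; [rewrite jacF_eq, <- Hzs; ring |].
unfold rayF, r0, p0, px, py, pz; cbn; rewrite cos_0, sin_0.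
f_equal; [f_equal |]; [rewrite <- Hzs; ring | ring |].
transitivity (z * ((sin th)² + (cos th)²)); [rewrite <- Hzs; unfold Rsqr; ring |].
rewrite sin2_cos2; ring.
Qed.

Theorem proposition6 (Rr : R) (HR : 0 < Rr) (p : pt3) :
  caustic Rr p <-> (on_sphere Rr p \/ axis_plus Rr p \/ axis_minus Rr p).
Proof.
split; [apply caustic_sub_sphere_or_axes, HR |].
destruct p as [[x y] z].
intros [Hsph | [[Hx [Hy Hz]] | [Hx [Hy Hz]]]]; cbn in *.
- apply sphere_sub_caustic; [exact HR |].
  apply (on_sphere_iff Rr (x, y, z)); [lra | exact Hsph].
- subst x y; apply axis_sub_caustic; [exact HR |].
  rewrite Rabs_right by lra; exact Hz.
- subst x y; apply axis_sub_caustic; [exact HR |].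
  rewrite Rabs_left by lra; lra.
Qed.
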